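(* Let $\mathbf{E}$ be the category whose objects are algebras and whose morphisms $A\to A'$ are the algebra epimorphisms (surjective unital algebra homomorphisms) $k:A\to A'$, with ordinary composition. Let $\mathbf{P}$ be the category whose objects are, for some $n\ge1$, nonzero finite-dimensional real vector spaces $P$ of real symmetric $n\times n$ matrices, and in which a morphism from $P$ ($n\times n$ matrices) to $P'$ ($n'\times n'$ matrices) is given by a real $n\times n'$ matrix $w$ with $ww^T$ nonsingular and $w^TPw\subseteq P'$; this morphism is denoted $w^T[\cdot]w$ and acts by $L\mapsto w^TLw$, and composition is composition of these maps (the composite of $w^T[\cdot]w:P\to P'$ followed by $w'^T[\cdot]w':P'\to P''$ is $(ww')^T[\cdot](ww')$). Define $F$ on objects by $F[A]=\mathfrak{u}_A$ and, for an epimorphism $k:A_1\to A_2$ (identified with its matrix), $F(k)=k^T[\cdot]k:\mathfrak{u}_{A_2}\to\mathfrak{u}_{A_1}$. Then for every epimorphism $k$ one has $k^T\mathfrak{u}_{A_2}k\subseteq\mathfrak{u}_{A_1}$ and $kk^T$ nonsingular, so $F(k)$ is a morphism of $\mathbf{P}$, and $F:\mathbf{E}\to\mathbf{P}$ is a contravariant functor.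
   Context: An ''algebra'' is a real finite-dimensional unital associative algebra with underlying vector space $\mathbb{R}^n$, standard basis, elements column vectors $s=(x_1,\dots,x_n)^T$ and $\mathbf{d}s=(dx_1,\dots,dx_n)^T$. An uncurling metric of $A$ is a real symmetric $n\times n$ matrix $L$ with $d\big((s^{-1})^TL\,\mathbf{d}s\big)=0$ on an open ball centered at $\mathbf{1}_A$ consisting only of units; the anti-rotor $\mathfrak{u}_A$ is the vector space of uncurling metrics (it is nonzero for every algebra). *)

From HB Require Import structures.
From mathcomp Require Import all_boot all_order all_algebra.
From mathcomp Require Import all_classical all_reals all_analysis.
From mathcomp Require Import Rstruct Rstruct_topology.
Set Implicit Arguments. Unset Strict Implicit. Unset Printing Implicit Defensive.
Import Order.TTheory GRing.Theory Num.Theory.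
Import numFieldNormedType.Exports.
Local Open Scope classical_set_scope.
Local Open Scope ring_scope.

Notation RR := Rdefinitions.R.

(* A real finite-dimensional unital associative algebra on R^n
   (elements are column vectors, standard basis). *)
Record algebra (n : nat) := Algebra {
  amul : 'cV[RR]_n -> 'cV[RR]_n -> 'cV[RR]_n;
  aone : 'cV[RR]_n;
  amulDl : forall (a : RR) x y z, amul (a *: x + y) z = a *: amul x z + amul y z;
  amulDr : forall (a : RR) x y z, amul z (a *: x + y) = a *: amul z x + amul z y;
  amulA : forall x y z, amul x (amul y z) = amul (amul x y) z;
  amul1l : forall x, amul aone x = x;
  amul1r : forall x, amul x aone = x
}.

Definition aunit n (A : algebra n) (s : 'cV[RR]_n) : Prop :=
  exists t, amul A s t = aone A /\ amul A t s = aone A.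

(* the inverse s^{-1} of a unit s (junk value 0 on non-units) *)
Definition ainv n (A : algebra n) (s : 'cV[RR]_n) : 'cV[RR]_n :=
  xget 0 [set t | amul A s t = aone A /\ amul A t s = aone A].

Definition evec n (i : 'I_n) : 'cV[RR]_n := delta_mx i ord0.

(* j-th coefficient of the 1-form (s^{-1})^T L ds *)
Definition oneform n (A : algebra n) (L : 'M[RR]_n) (j : 'I_n)
  (s : 'cV[RR]_n) : RR^o := (((ainv A s)^T *m L) ord0 j).

(* L is an uncurling metric: symmetric, and the 1-form (s^{-1})^T L ds is
   closed (d = 0, i.e. d_i w_j = d_j w_i) on an open ball centred at 1_A
   consisting only of units. *)
Definition uncurling n (A : algebra n) (L : 'M[RR]_n) : Prop :=
  L^T = L /\
  exists r : RR, 0 < r /\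
    (forall s, ball (aone A) r s -> aunit A s) /\
    (forall s, ball (aone A) r s -> forall i j : 'I_n,
       'D_(evec i) (oneform A L j) s = 'D_(evec j) (oneform A L i) s).

Definition antirotor n (A : algebra n) : set 'M[RR]_n := [set L | uncurling A L].

Definition epimorphism n1 n2 (A1 : algebra n1) (A2 : algebra n2)
  (k : 'M[RR]_(n2, n1)) : Prop :=
  (forall x y, k *m amul A1 x y = amul A2 (k *m x) (k *m y)) /\
  k *m aone A1 = aone A2 /\
  (forall y : 'cV[RR]_n2, exists x : 'cV[RR]_n1, k *m x = y).

Definition Pmorphism n n' (P : set 'M[RR]_n) (P' : set 'M[RR]_n')
  (w : 'M[RR]_(n, n')) : Prop :=
  (w *m w^T) \in unitmx /\ (forall L, P L -> P' (w^T *m L *m w)).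

From HB Require Import structures.
From mathcomp Require Import all_boot all_order all_algebra.
From mathcomp Require Import all_classical all_reals all_analysis.
From mathcomp Require Import Rstruct Rstruct_topology.
Import Order.TTheory GRing.Theory Num.Theory.
Import numFieldNormedType.Exports.
Set Implicit Arguments. Unset Strict Implicit. Unset Printing Implicit Defensive.
Local Open Scope classical_set_scope.
Local Open Scope ring_scope.

(* The left regular representation x |-> L_x ([lmulmx]) identifies the units of
   A with the x such that det L_x <> 0, and L_(s^-1) = (L_s)^-1.  By continuity
   of det and of matrix inversion the units form a neighbourhood of 1, on which
   s |-> s^-1 has directional derivative v |-> - s^-1 v s^-1.  Hence L is
   uncurling iff L is symmetric and, near 1, so is the Jacobian
   J_L(s) = - (S_(s^-1))^T L of the coefficients of (s^-1)^T L ds, where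
   S_t u = t u t.  An epimorphism k preserves units and inverses and intertwines
   the maps S_t, so J_(k^T L k)(s) = k^T J_L(k s) k; being continuous, k sends a
   small ball around 1 into the ball on which J_L is symmetric.  Finally k k^T
   is invertible: k^T is injective because k is onto, and u k k^T u^T is the
   squared norm of u k. *)

Lemma eq_mulmx_cV (R : pzRingType) m n (M N : 'M[R]_(m, n)) :
  (forall u : 'cV_n, M *m u = N *m u) -> M = N.
Proof.
move=> MN; apply/matrixP => i j.
by have /matrixP/(_ i 0) := MN (delta_mx j 0); rewrite -!colE !mxE.
Qed.

Definition cV_lin_mx (R : pzRingType) m p (f : 'cV[R]_m -> 'cV[R]_p) : 'M[R]_(p, m) :=
  \matrix_(i, j) f (delta_mx j 0) i 0.

Lemma cV_lin_mxE (R : comPzRingType) m p (f : 'cV[R]_m -> 'cV[R]_p) :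
  (forall a x y, f (a *: x + y) = a *: f x + f y) ->
  forall x, cV_lin_mx f *m x = f x.
Proof.
move=> f_lin x.
pose fL : {linear 'cV[R]_m -> 'cV[R]_p} :=
  HB.pack f (GRing.isLinear.Build _ _ _ _ f f_lin).
have -> : f = fL by [].
have -> : x = \sum_j x j 0 *: delta_mx j 0.
  by rewrite {1}[x]matrix_sum_delta; apply: eq_bigr => j _; rewrite big_ord1.
rewrite !linear_sum; apply: eq_bigr => j _.
rewrite !linearZ /= -colE; congr (_ *: _).
by apply/matrixP => i k; rewrite (ord1 k) !mxE.
Qed.

Lemma rV_mul_tr_eq0 (R : realDomainType) n (u : 'rV[R]_n) : u *m u^T = 0 -> u = 0.
Proof.
move=> /matrixP /(_ 0 0); rewrite !mxE.
under eq_bigr do rewrite mxE -expr2.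
move=> /psumr_eq0P u0; apply/rowP => i; rewrite mxE; apply/eqP.
by rewrite -sqrf_eq0 u0 // => l _; exact: sqr_ge0.
Qed.

Lemma unitmx_mul_tr (R : realFieldType) m n (k : 'M[R]_(m, n)) :
  (forall y : 'cV[R]_m, exists x, k *m x = y) -> k *m k^T \in unitmx.
Proof.
move=> k_surj; rewrite -row_free_unit; apply: inj_row_free => u ukk0.
have uk0 : u *m k = 0.
  by apply: rV_mul_tr_eq0; rewrite trmx_mul mulmxA -(mulmxA u) ukk0 mul0mx.
apply/rowP => j; have [x kx] := k_surj (delta_mx j 0).
have : u *m (k *m x) = 0 by rewrite mulmxA uk0 mul0mx.
by rewrite kx -colE => /matrixP /(_ 0 0); rewrite !mxE.
Qed.

Section MatrixLimits.
Context {R : realFieldType} {T : Type} (F : set_system T) {FF : Filter F}.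

Lemma cvg_mxP m n (X : T -> 'M[R]_(m, n)) (X0 : 'M[R]_(m, n)) :
  X @ F --> X0 <-> forall i j, (fun x => X x i j) @ F --> X0 i j.
Proof.
split=> [XX0 i j | XX0].
  exact: (cvg_comp _ _ XX0 (@coord_continuous R m n i j X0)).
apply/cvgrPdist_le => /= e e0; near=> x.
rewrite [leLHS]/Num.Def.normr/= mx_normrE (bigmax_le _ (ltW e0))//= => -[i j] _.
rewrite !mxE/=.
move: i j; near: x; apply: filter_forall => i; apply: filter_forall => j.
exact: (cvgrPdist_le _ _).1 (XX0 i j) e e0.
Unshelve. all: by end_near. Qed.

Lemma cvg_sumr (I : Type) (r : seq I) (P : pred I) (f : I -> T -> R) (a : I -> R) :
  (forall i, P i -> f i @ F --> a i) ->
  (fun x => \sum_(i <- r | P i) f i x) @ F --> \sum_(i <- r | P i) a i.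
Proof.
by apply: cvg_big => // z; exact: (@pseudometric_normed_Zmodule.add_continuous _ R^o z).
Qed.

Lemma cvg_prodr (I : Type) (r : seq I) (P : pred I) (f : I -> T -> R) (a : I -> R) :
  (forall i, P i -> f i @ F --> a i) ->
  (fun x => \prod_(i <- r | P i) f i x) @ F --> \prod_(i <- r | P i) a i.
Proof. by apply: cvg_big => //; exact: mul_continuous. Qed.

Lemma cvg_mulmx m n p (X : T -> 'M[R]_(m, n)) (Y : T -> 'M[R]_(n, p))
    (X0 : 'M[R]_(m, n)) (Y0 : 'M[R]_(n, p)) :
  X @ F --> X0 -> Y @ F --> Y0 -> (fun x => X x *m Y x) @ F --> X0 *m Y0.
Proof.
move=> /cvg_mxP XX0 /cvg_mxP YY0; apply/cvg_mxP => i j; rewrite mxE.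
under eq_cvg do rewrite mxE.
by apply: cvg_sumr => l _; apply: cvgM.
Qed.

Lemma cvg_trmx m n (X : T -> 'M[R]_(m, n)) (X0 : 'M[R]_(m, n)) :
  X @ F --> X0 -> (fun x => (X x)^T) @ F --> X0^T.
Proof.
move=> /cvg_mxP XX0; apply/cvg_mxP => i j; rewrite mxE.
under eq_cvg do rewrite mxE; exact: XX0.
Qed.

Lemma cvg_det n (X : T -> 'M[R]_n) (X0 : 'M[R]_n) :
  X @ F --> X0 -> (fun x => \det (X x)) @ F --> \det X0.
Proof.
move=> /cvg_mxP XX0; apply: cvg_sumr => s _; apply: cvgM; first exact: cvg_cst.
by apply: cvg_prodr => i _.
Qed.

Lemma cvg_adj n (X : T -> 'M[R]_n) (X0 : 'M[R]_n) :
  X @ F --> X0 -> (fun x => \adj (X x)) @ F --> \adj X0.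
Proof.
move=> /cvg_mxP XX0; apply/cvg_mxP => i j; rewrite mxE.
under eq_cvg do rewrite mxE.
apply: cvgM; first exact: cvg_cst.
apply/cvg_det/cvg_mxP => a b; rewrite !mxE.
under eq_cvg do rewrite !mxE; exact: XX0.
Qed.

Lemma cvg_invmx n (X : T -> 'M[R]_n) (X0 : 'M[R]_n) : X0 \in unitmx ->
  X @ F --> X0 -> (fun x => invmx (X x)) @ F --> invmx X0.
Proof.
move=> X0unit XX0.
have det0 : \det X0 != 0 by rewrite -unitfE -unitmxE.
have detX := cvg_det XX0.
have cramer : (fun x => (\det (X x))^-1 *: \adj (X x)) @ F --> invmx X0.
  by rewrite /invmx X0unit; apply: cvgZ; [exact: cvgV | exact: cvg_adj].
apply: cvg_trans cramer; apply: near_eq_cvg; near=> x.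
suff Xunit : X x \in unitmx by rewrite /invmx Xunit.
rewrite unitmxE unitfE; near: x; exact: (@cvgr_neq0 _ R^o _ F FF _ _ detX det0).
Unshelve. all: by end_near. Qed.

End MatrixLimits.

Lemma mulmx_continuous (R : realFieldType) m n p (M : 'M[R]_(m, n)) :
  continuous (fun x : 'M[R]_(n, p) => M *m x).
Proof. by move=> x; apply: (@cvg_mulmx _ _ (nbhs x)); [exact: cvg_cst | exact: cvg_id]. Qed.

Section RegularRepresentation.
Variables (n : nat) (A : algebra n).
Local Notation mul := (amul A).
Local Notation one := (aone A).

Definition lmulmx x := cV_lin_mx (mul x).
Definition rmulmx z := cV_lin_mx (mul ^~ z).
Definition sandwichmx t := lmulmx t *m rmulmx t.

Lemma lmulmxE x y : lmulmx x *m y = mul x y.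
Proof. by rewrite cV_lin_mxE // => a u v; rewrite amulDr. Qed.

Lemma rmulmxE z x : rmulmx z *m x = mul x z.
Proof. by rewrite cV_lin_mxE // => a u v; rewrite amulDl. Qed.

Lemma sandwichmxE t u : sandwichmx t *m u = mul t (mul u t).
Proof. by rewrite -mulmxA rmulmxE lmulmxE. Qed.

Lemma lmulmxM x y : lmulmx (mul x y) = lmulmx x *m lmulmx y.
Proof. by apply: eq_mulmx_cV => z; rewrite -mulmxA !lmulmxE amulA. Qed.

Lemma lmulmx1 : lmulmx one = 1%:M.
Proof. by apply: eq_mulmx_cV => z; rewrite lmulmxE amul1l mul1mx. Qed.

Lemma aunit1 : aunit A one.
Proof. by exists one; rewrite amul1l. Qed.

Lemma ainvP s : aunit A s -> mul s (ainv A s) = one /\ mul (ainv A s) s = one.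
Proof. exact: (@xgetPex _ 0 [set t | mul s t = one /\ mul t s = one]). Qed.

Lemma ainv_eq s t : aunit A s -> mul s t = one -> ainv A s = t.
Proof. by move=> /ainvP[_ ss'] st; rewrite -[t](amul1l A) -ss' -amulA st amul1r. Qed.

Lemma aunitE s : aunit A s <-> lmulmx s \in unitmx.
Proof.
split=> s_unit.
  have [ss' _] := ainvP s_unit.
  have [] // := @mulmx1_unit _ _ (lmulmx s) (lmulmx (ainv A s)).
  by rewrite -lmulmxM ss' lmulmx1.
have st : mul s (invmx (lmulmx s) *m one) = one by rewrite -lmulmxE mulKVmx.
exists (invmx (lmulmx s) *m one); split=> //.
rewrite -[LHS](mulKmx s_unit) lmulmxE amulA st amul1l.
by rewrite -[s in _ *m s](amul1r A) -lmulmxE mulKmx.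
Qed.

Lemma lmulmx_ainv s : aunit A s -> lmulmx (ainv A s) = invmx (lmulmx s).
Proof.
move=> s_unit; have [ss' _] := ainvP s_unit.
by rewrite -[LHS](mulKmx ((aunitE s).1 s_unit)) -lmulmxM ss' lmulmx1 mulmx1.
Qed.

Lemma ainvB x s : aunit A x -> aunit A s ->
  ainv A x - ainv A s = lmulmx (ainv A x) *m rmulmx (ainv A s) *m (s - x).
Proof.
move=> x_unit s_unit; have [_ x'x] := ainvP x_unit; have [ss' _] := ainvP s_unit.
by rewrite -mulmxA mulmxBr !rmulmxE ss' mulmxBr !lmulmxE amul1r amulA x'x amul1l.
Qed.

Lemma ainv_difference_quotient s v (h : RR) : h != 0 ->
  aunit A (h *: v + s) -> aunit A s ->
  h^-1 *: (ainv A (h *: v + s) - ainv A s)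
    = - (lmulmx (ainv A (h *: v + s)) *m rmulmx (ainv A s) *m v).
Proof.
move=> h0 hvs_unit s_unit.
rewrite ainvB // opprD addrCA subrr addr0 -scaleNr -scalemxAr scalerA.
by rewrite mulrN mulVf // scaleN1r.
Qed.

Section Limits.
Context {T : Type} (F : set_system T) {FF : Filter F}.

Lemma cvg_lmulmx (X : T -> 'cV[RR]_n) x :
  X @ F --> x -> (fun t => lmulmx (X t)) @ F --> lmulmx x.
Proof.
move=> Xx; apply/cvg_mxP => i j.
have lmulmx_entry y : lmulmx y i j = (rmulmx (delta_mx j 0) *m y) i 0.
  by rewrite rmulmxE /lmulmx /cV_lin_mx mxE.
rewrite lmulmx_entry; under eq_cvg do rewrite lmulmx_entry.
exact: (cvg_mxP _ _).1 (cvg_mulmx (cvg_cst _) Xx) i 0.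
Qed.

Lemma near_aunit (X : T -> 'cV[RR]_n) s :
  X @ F --> s -> aunit A s -> \forall t \near F, aunit A (X t).
Proof.
move=> Xs /aunitE; rewrite unitmxE unitfE => det_s.
have det_near := @cvgr_neq0 _ RR^o _ F FF _ _ (cvg_det (cvg_lmulmx Xs)) det_s.
near=> t; apply/aunitE; rewrite unitmxE unitfE; near: t; exact: det_near.
Unshelve. all: by end_near. Qed.

Lemma cvg_lmulmx_ainv (X : T -> 'cV[RR]_n) s : X @ F --> s -> aunit A s ->
  (fun t => lmulmx (ainv A (X t))) @ F --> lmulmx (ainv A s).
Proof.
move=> Xs s_unit; rewrite lmulmx_ainv //.
apply: cvg_trans (near_eq_cvg _) (cvg_invmx ((aunitE s).1 s_unit) (cvg_lmulmx Xs)).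
near=> t; rewrite lmulmx_ainv //; near: t; exact: near_aunit Xs s_unit.
Unshelve. all: by end_near. Qed.

End Limits.

Lemma aunit_near1 : \forall s \near one, aunit A s.
Proof. exact: (near_aunit (F := nbhs one) (X := id) cvg_id aunit1). Qed.

End RegularRepresentation.

Definition oneform_jacobian n (A : algebra n) (L : 'M[RR]_n) (s : 'cV[RR]_n) : 'M[RR]_n :=
  - ((sandwichmx A (ainv A s))^T *m L).

Lemma derive_oneform n (A : algebra n) (L : 'M[RR]_n) (j : 'I_n) (s v : 'cV[RR]_n) :
  aunit A s -> 'D_v (oneform A L j) s = (v^T *m oneform_jacobian A L s) 0 j.
Proof.
move=> s_unit; set t := ainv A s.
have line_s : (fun h : RR => h *: v + s) @ (0 : RR) --> s.
  rewrite -{2}[s]add0r -(scale0r v).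
  by apply: cvgD (cvg_cst _); apply: cvgZ (cvg_cst _).
pose P h := lmulmx A (ainv A (h *: v + s)) *m rmulmx A t.
have P_lim :
    (fun h => (- (P h *m v))^T *m L) @ (0 : RR) --> (- (sandwichmx A t *m v))^T *m L.
  apply: cvg_mulmx _ (cvg_cst L); apply: cvg_trmx; apply: cvgN.
  apply: cvg_mulmx _ (cvg_cst v); apply: cvg_mulmx _ (cvg_cst _).
  exact: cvg_lmulmx_ainv line_s s_unit.
have -> : (v^T *m oneform_jacobian A L s) 0 j = ((- (sandwichmx A t *m v))^T *m L) 0 j.
  by rewrite /oneform_jacobian mulmxN mulmxA -trmx_mul -mulNmx -raddfN.
apply: cvg_lim => //.
apply: cvg_trans (cvg_within_filter _ ((cvg_mxP _ _).1 P_lim 0 j)).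
apply: near_eq_cvg; near=> h.
have h0 : h != 0 by near: h; exact: nbhs_dnbhs_neq.
have h_unit : aunit A (h *: v + s).
  by near: h; apply: cvg_within; exact: near_aunit line_s s_unit.
rewrite -ainv_difference_quotient // linearZ /= -scalemxAl linearB /= mulmxBl.
by rewrite [LHS]mxE [X in _ * X]mxE [X in _ * (_ + X)]mxE.
Unshelve. all: by end_near. Qed.

Lemma derive_oneform_evec n (A : algebra n) (L : 'M[RR]_n) (i j : 'I_n) (s : 'cV[RR]_n) :
  aunit A s -> 'D_(evec i) (oneform A L j) s = oneform_jacobian A L s i j.
Proof. by move=> s_unit; rewrite derive_oneform // /evec trmx_delta -rowE mxE. Qed.

Lemma uncurlingP n (A : algebra n) (L : 'M[RR]_n) :
  uncurling A L <->
  L^T = L /\ exists2 r : RR, 0 < r & forall s, ball (aone A) r s ->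
    aunit A s /\ (oneform_jacobian A L s)^T = oneform_jacobian A L s.
Proof.
split=> -[LT].
  move=> [r [r0 [units closed]]]; split=> //; exists r => // s s_ball.
  split; first exact: units.
  apply/matrixP => i j; rewrite [LHS]mxE -!derive_oneform_evec; try exact: units.
  exact: closed.
move=> [r r0 J_sym]; split=> //; exists r; split=> //.
split=> [s /J_sym[] // | s /J_sym[s_unit Js_sym] i j].
by rewrite !derive_oneform_evec // -[in RHS]Js_sym [RHS]mxE.
Qed.

Lemma epimorphism1 n (A : algebra n) : epimorphism A A 1%:M.
Proof.
split=> [x y | ]; first by rewrite !mul1mx.
by split=> [ | y]; [rewrite mul1mx | exists y; rewrite mul1mx].
Qed.

Lemma epimorphism_comp n1 n2 n3 (A1 : algebra n1) (A2 : algebra n2) (A3 : algebra n3)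
    (k1 : 'M[RR]_(n2, n1)) (k2 : 'M[RR]_(n3, n2)) :
  epimorphism A1 A2 k1 -> epimorphism A2 A3 k2 -> epimorphism A1 A3 (k2 *m k1).
Proof.
move=> [k1M [k11 k1_surj]] [k2M [k21 k2_surj]].
split=> [x y | ]; first by rewrite -!mulmxA k1M k2M.
split=> [ | y]; first by rewrite -mulmxA k11 k21.
by have [y2 <-] := k2_surj y; have [x <-] := k1_surj y2; exists x; rewrite mulmxA.
Qed.

Section Epimorphism.
Variables (n1 n2 : nat) (A1 : algebra n1) (A2 : algebra n2) (k : 'M[RR]_(n2, n1)).
Hypothesis k_epi : epimorphism A1 A2 k.

Lemma epi_aunit s : aunit A1 s -> aunit A2 (k *m s).
Proof.
have [kM [k1 _]] := k_epi.
move=> s_unit; have [ss' s's] := ainvP s_unit.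
by exists (k *m ainv A1 s); rewrite -!kM ss' s's k1.
Qed.

Lemma epi_ainv s : aunit A1 s -> ainv A2 (k *m s) = k *m ainv A1 s.
Proof.
have [kM [k1 _]] := k_epi.
move=> s_unit; have [ss' _] := ainvP s_unit.
by apply: ainv_eq (epi_aunit s_unit) _; rewrite -kM ss' k1.
Qed.

Lemma epi_sandwichmx t : k *m sandwichmx A1 t = sandwichmx A2 (k *m t) *m k.
Proof.
have [kM _] := k_epi.
by apply: eq_mulmx_cV => u; rewrite -[LHS]mulmxA -[RHS]mulmxA !sandwichmxE !kM.
Qed.

Lemma oneform_jacobian_epi L s : aunit A1 s ->
  oneform_jacobian A1 (k^T *m L *m k) s = k^T *m oneform_jacobian A2 L (k *m s) *m k.
Proof.
move=> s_unit; rewrite /oneform_jacobian epi_ainv // mulmxN mulNmx !mulmxA.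
by rewrite -trmx_mul epi_sandwichmx trmx_mul.
Qed.

Lemma uncurling_epi L : uncurling A2 L -> uncurling A1 (k^T *m L *m k).
Proof.
have [_ [k1 _]] := k_epi.
move=> /uncurlingP[LT [r r0 L_sym]]; apply/uncurlingP.
split; first by rewrite !trmx_mul trmxK LT mulmxA.
have : \forall s \near aone A1, aunit A1 s /\ ball (aone A2) r (k *m s).
  near=> s; split; near: s; first exact: aunit_near1.
  have k_cont : (fun s => k *m s) @ aone A1 --> aone A2.
    by rewrite -k1; exact: mulmx_continuous.
  exact: k_cont (ball (aone A2) r) (nbhsx_ballx _ _ r0).
move=> /nbhs_ballP[e e0 near_one]; exists e => // s /near_one[s_unit ks_ball].
have [_ J_sym] := L_sym _ ks_ball.
by split=> //; rewrite oneform_jacobian_epi // !trmx_mul trmxK J_sym mulmxA.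
Unshelve. all: by end_near. Qed.

Lemma epi_mul_tr_unit : k *m k^T \in unitmx.
Proof. by have [_ [_ k_surj]] := k_epi; exact: unitmx_mul_tr. Qed.

End Epimorphism.

Theorem theorem6p1 :
  (* F(k) = k^T[.]k is a morphism u_{A2} -> u_{A1} of P, for every epimorphism k *)
  (forall (n1 n2 : nat) (A1 : algebra n1) (A2 : algebra n2) (k : 'M[RR]_(n2, n1)),
     epimorphism A1 A2 k ->
     (forall L, antirotor A2 L -> antirotor A1 (k^T *m L *m k)) /\
     (k *m k^T) \in unitmx /\
     Pmorphism (antirotor A2) (antirotor A1) k) /\
  (* F preserves identities *)
  (forall (n : nat) (A : algebra n),
     epimorphism A A 1%:M /\
     forall L, antirotor A L -> (1%:M : 'M[RR]_n)^T *m L *m 1%:M = L) /\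
  (* F is contravariant: F(k2 o k1) = F(k1) o F(k2) *)
  (forall (n1 n2 n3 : nat) (A1 : algebra n1) (A2 : algebra n2) (A3 : algebra n3)
          (k1 : 'M[RR]_(n2, n1)) (k2 : 'M[RR]_(n3, n2)),
     epimorphism A1 A2 k1 -> epimorphism A2 A3 k2 ->
     epimorphism A1 A3 (k2 *m k1) /\
     forall L, antirotor A3 L ->
       (k2 *m k1)^T *m L *m (k2 *m k1) = k1^T *m (k2^T *m L *m k2) *m k1).
Proof.
split.
  move=> n1 n2 A1 A2 k k_epi.
  have pullback : forall L, antirotor A2 L -> antirotor A1 (k^T *m L *m k).
    exact: uncurling_epi.
  have kkT_unit := epi_mul_tr_unit k_epi.
  by split=> //; split=> //; split.
split=> [n A | n1 n2 n3 A1 A2 A3 k1 k2 k1_epi k2_epi].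
  by split=> [ | L _]; [exact: epimorphism1 | rewrite trmx1 mul1mx mulmx1].
by split=> [ | L _]; [exact: epimorphism_comp k1_epi k2_epi | rewrite trmx_mul !mulmxA].
Qed.
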